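(* Let $\xi_1,\dots,\xi_n$ be independent real random variables with $\mathbf{E}\xi_i=0$, satisfying Bernstein's condition: there is a constant $\varepsilon>0$ such that $|\mathbf{E}\xi_i^k|\le \frac12 k!\,\varepsilon^{k-2}\mathbf{E}\xi_i^2$ for all $k\ge 3$ and $i=1,\dots,n$. Let $\sigma^2=\sum_{i=1}^n\mathbf{E}\xi_i^2$, $\Psi_n(\lambda)=\sum_{i=1}^n\log\mathbf{E}e^{\lambda\xi_i}$ and $T_n(\lambda)=\sum_{i=1}^n\frac{\mathbf{E}\xi_ie^{\lambda\xi_i}}{\mathbf{E}e^{\lambda\xi_i}}$. Then for all $0\le\lambda<\varepsilon^{-1}$, \[ \Psi_n(\lambda)\le n\log\Big(1+\frac{\lambda^2\sigma^2}{2n(1-\lambda\varepsilon)}\Big)\le\frac{\lambda^2\sigma^2}{2(1-\lambda\varepsilon)} \] and \[ -\lambda T_n(\lambda)+\Psi_n(\lambda)\ge-\frac{\lambda^2\sigma^2}{2(1-\lambda\varepsilon)^6}. \] *)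

From HB Require Import structures.
From mathcomp Require Import all_boot all_order all_algebra.
From mathcomp Require Import all_classical all_reals all_analysis.
Set Implicit Arguments. Unset Strict Implicit. Unset Printing Implicit Defensive.
Import Order.TTheory GRing.Theory Num.Theory.
Local Open Scope classical_set_scope.
Local Open Scope ring_scope.

(* Mutual independence of a finite family of real random variables:
   for every family of Borel sets B_i, P(\bigcap_i xi_i^-1 B_i) = prod_i P(xi_i^-1 B_i).
   (Taking B_i = setT for i outside a subfamily gives the product rule
   for every subfamily.) *)
Definition mutually_independent d (T : measurableType d) (R : realType)
  (P : probability T R) (n : nat) (xi : 'I_n -> {RV P >-> R}) : Prop :=
  forall B : 'I_n -> set R, (forall i, measurable (B i)) ->
    P (\bigcap_(i in [set: 'I_n]) (xi i @^-1` B i)) =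
    (\prod_(i < n) P (xi i @^-1` B i))%E.

(* Real value of E[X] (X assumed integrable where used). *)
Definition Ereal d (T : measurableType d) (R : realType)
  (P : probability T R) (X : T -> R) : R := fine ('E_P[X])%E.

Definition Psi d (T : measurableType d) (R : realType)
  (P : probability T R) (n : nat) (xi : 'I_n -> {RV P >-> R}) (lam : R) : R :=
  \sum_(i < n) ln (Ereal P (fun x => expR (lam * xi i x))).

Definition Tn d (T : measurableType d) (R : realType)
  (P : probability T R) (n : nat) (xi : 'I_n -> {RV P >-> R}) (lam : R) : R :=
  \sum_(i < n) (Ereal P (fun x => xi i x * expR (lam * xi i x)) /
                Ereal P (fun x => expR (lam * xi i x))).

Definition sigma2 d (T : measurableType d) (R : realType)
  (P : probability T R) (n : nat) (xi : 'I_n -> {RV P >-> R}) : R :=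
  \sum_(i < n) Ereal P (fun x => xi i x ^+ 2).

From HB Require Import structures.
From mathcomp Require Import all_boot all_order all_algebra.
From mathcomp Require Import all_classical all_reals all_analysis.
From mathcomp Require Import ring lra measurable_realfun.
Import Order.TTheory GRing.Theory Num.Theory.
Import numFieldNormedType.Exports.
Local Open Scope classical_set_scope.
Local Open Scope ring_scope.

(* For one centred variable X with Bernstein moments, write M = E e^{lam X} and
   N = E X e^{lam X}. Expanding e^{lam X} in its power series, the k-th term is
   bounded by Bernstein's condition and the tails are dominated by the series
   sum_j (lam eps)^j and sum_j (j+1) (lam eps)^j, whence
     1 <= M <= 1 + lam^2 E X^2 / (2 (1 - lam eps)),
     M - lam N >= 1 - lam^2 E X^2 / (2 (1 - lam eps)^2).
   Expectation and series are exchanged by dominated convergence, with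
   (1 + 1/(mu - lam)) (e^{mu X} + e^{-mu X}) for some lam < mu < 1/eps as
   dominating function. Its integrability comes from monotone convergence: the
   series of e^{mu X} + e^{-mu X} has nonnegative terms and involves only the
   moments E X^k, which Bernstein's condition controls (unlike E |X|^k).
   Summing over the variables, concavity of ln gives the bounds on Psi_n, and
   ln M >= 1 - 1/M turns the second inequality into
   -lam N / M + ln M >= -lam^2 E X^2 / (2 (1 - lam eps)^2). *)

Section real_inequalities.
Context {R : realType}.

Lemma sum_geometric_le (r : R) K : 0 <= r < 1 -> \sum_(j < K) r ^+ j <= (1 - r)^-1.
Proof.
move=> /andP[r_ge0 r_lt1].
have telescope : \sum_(j < K) r ^+ j * (1 - r) = 1 - r ^+ K.
  elim: K => [|K IH]; first by rewrite big_ord0 expr0 subrr.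
  by rewrite big_ord_recr /= IH exprS; ring.
have r1_gt0 : 0 < 1 - r by rewrite subr_gt0.
rewrite -(ler_pM2r r1_gt0) mulVf ?gt_eqF // big_distrl /= telescope.
by rewrite lerBlDr lerDl exprn_ge0.
Qed.

Lemma sum_arithmetico_geometric_le (r : R) K : 0 <= r < 1 ->
  \sum_(j < K) j.+1%:R * r ^+ j <= (1 - r) ^- 2.
Proof.
move=> /andP[r_ge0 r_lt1].
have telescope : \sum_(j < K) j.+1%:R * r ^+ j * (1 - r) ^+ 2
   = 1 - K.+1%:R * r ^+ K + K%:R * r ^+ K.+1.
  elim: K => [|K IH]; first by rewrite big_ord0 !expr0 mul0r; ring.
  by rewrite big_ord_recr /= IH !exprS -!natr1; ring.
have r1_gt0 : 0 < (1 - r) ^+ 2 by rewrite exprn_gt0 // subr_gt0.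
rewrite -(ler_pM2r r1_gt0) mulVf ?gt_eqF // big_distrl /= telescope.
have rK_ge0 : 0 <= r ^+ K by rewrite exprn_ge0.
have K_ge0 : (0 : R) <= K%:R by rewrite ler0n.
have : K%:R * (r * r ^+ K) <= K%:R * r ^+ K by rewrite ler_wpM2l // ler_piMl // ltW.
by rewrite exprS -natr1; nra.
Qed.

Definition expR_partial (y : R) K := \sum_(k < K) y ^+ k / k`!%:R.

Lemma expR_partialE y : expR_partial y = series (exp_coeff y).
Proof. by apply/funext => K; rewrite /series /= big_mkord. Qed.

Lemma cvg_expR_partial y : expR_partial y @ \oo --> expR y.
Proof. by rewrite expR_partialE; exact: is_cvg_series_exp_coeff. Qed.

Lemma norm_expR_partial_le y K : `|expR_partial y K| <= expR `|y|.
Proof.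
apply: (@le_trans _ _ (expR_partial `|y| K)).
  apply: (le_trans (ler_norm_sum _ _ _)); apply: ler_sum => k _.
  by rewrite normrM normfV normrX (ger0_norm (ler0n _ _)).
rewrite expR_partialE; apply: nondecreasing_cvgn_le; last first.
  exact: is_cvg_series_exp_coeff.
apply/nondecreasing_seqP => m; rewrite /series /= big_nat_recr //= lerDl.
exact: exp_coeff_ge0.
Qed.

Lemma expR_norm_le (y : R) : expR `|y| <= expR y + expR (- y).
Proof.
case: (lerP 0 y) => y0; first by rewrite ger0_norm // lerDl expR_ge0.
by rewrite ltr0_norm // lerDr expR_ge0.
Qed.

Lemma expr_addNr_ge0 (y : R) n : 0 <= y ^+ n + (- y) ^+ n.
Proof.
rewrite exprNn -signr_odd; case: (boolP (odd n)) => n_odd.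
  by rewrite expr1 mulN1r subrr.
by rewrite expr0 mul1r addr_ge0 // exprn_even_ge0.
Qed.

Lemma nondecreasing_expR_partial_sym (y : R) :
  nondecreasing_seq (fun K => expR_partial y K + expR_partial (- y) K).
Proof.
apply/nondecreasing_seqP => K; rewrite /expR_partial !big_ord_recr /=.
have := expr_addNr_ge0 y K; have : 0 <= (K`!%:R : R)^-1 by rewrite invr_ge0.
nra.
Qed.

Lemma mul_expR_le (t lam mu : R) : 0 <= t -> lam < mu ->
  t * expR (lam * t) <= expR (mu * t) / (mu - lam).
Proof.
move=> t_ge0 lam_mu; have del_gt0 : 0 < mu - lam by rewrite subr_gt0.
rewrite ler_pdivlMr // (_ : mu * t = (mu - lam) * t + lam * t); last by ring.
rewrite expRD mulrAC ler_wpM2r ?expR_ge0 // mulrC.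
by have := expR_ge1Dx ((mu - lam) * t); lra.
Qed.

Lemma ln_le_tangent (u a : R) : 0 < u -> 0 < a -> ln u <= ln a + (u - a) / a.
Proof.
move=> u_gt0 a_gt0.
have ua : -1 < u / a - 1.
  have : 0 < u / a by rewrite divr_gt0.
  lra.
have := le_ln1Dx ua; rewrite addrC subrK ln_div ?posrE //.
have -> : (u - a) / a = u / a - 1 by field; rewrite gt_eqF.
lra.
Qed.

Lemma ln_ge1BVx (x : R) : 0 < x -> 1 - x^-1 <= ln x.
Proof.
move=> x_gt0; have := @ln_le_tangent 1 x ltr01 x_gt0; rewrite ln1.
have -> : (1 - x) / x = x^-1 - 1 by field; rewrite gt_eqF.
lra.
Qed.

Lemma sum_ln_le_mean n (M b : 'I_n -> R) :
  (forall i, 0 < M i) -> (forall i, 0 <= b i) -> (forall i, M i <= 1 + b i) ->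
  \sum_(i < n) ln (M i) <= n%:R * ln (1 + (\sum_(i < n) b i) / n%:R).
Proof.
case: n M b => [|n] M b M_gt0 b_ge0 Mb; first by rewrite big_ord0 mul0r.
pose a := 1 + (\sum_(i < n.+1) b i) / n.+1%:R; rewrite -/a.
have a_gt0 : 0 < a by rewrite /a addrC ltr_pwDr ?ltr01 ?divr_ge0 ?sumr_ge0.
apply: (@le_trans _ _ (\sum_(i < n.+1) (ln a + (1 + b i - a) / a))).
  apply: ler_sum => i _; apply: (le_trans (ln_le_tangent _ _ (M_gt0 i) a_gt0)).
  by rewrite lerD2l ler_pM2r ?invr_gt0 // lerD2r.
have mean : \sum_(i < n.+1) (1 + b i - a) = 0.
  rewrite sumrB big_split /= !sumr_const card_ord -[a *+ _]mulr_natl /a.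
  by field; rewrite paddr_eq0 ?ler01 ?ler0n // oner_eq0.
by rewrite big_split /= sumr_const card_ord -big_distrl /= mean mul0r addr0 mulr_natl.
Qed.

Lemma natr_mul_ln1D_le n (x : R) : 0 <= x -> n%:R * ln (1 + x / n%:R) <= x.
Proof.
case: n => [|n] x_ge0; first by rewrite mul0r.
have n_gt0 : (0 : R) < n.+1%:R by rewrite ltr0n.
apply: le_trans (ler_wpM2l (ltW n_gt0) (le_ln1Dx _)) _.
  exact: lt_le_trans (ltrN10 R) (divr_ge0 x_ge0 (ltW n_gt0)).
by rewrite mulrC divfK ?gt_eqF.
Qed.

Lemma ln_sub_ratio_ge (M N q lam : R) : 1 <= M -> 0 <= q -> 1 - q <= M - lam * N ->
  - q <= - lam * (N / M) + ln M.
Proof.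
move=> M_ge1 q_ge0 MN.
have M_gt0 : 0 < M by lra.
have := ln_ge1BVx _ M_gt0; set r := M^-1 => lnM.
have r_ge0 : 0 <= r by rewrite invr_ge0 ltW.
have r_le1 : r <= 1 by rewrite invf_le1.
have rM : r * M = 1 by rewrite mulVf ?gt_eqF.
have MN_scaled : 0 <= r * (M - lam * N - 1 + q) by rewrite mulr_ge0 //; lra.
have q_scaled : 0 <= (1 - r) * q by rewrite mulr_ge0 //; lra.
have e : r * (M - lam * N - 1 + q) = r * M - lam * (N * r) - r + r * q by ring.
rewrite e rM in MN_scaled.
lra.
Qed.

End real_inequalities.

Section dominated_convergence.
Context {d} {T : measurableType d} {R : realType} (P : probability T R).

Lemma Ereal_Rintegral (X : T -> R) : Ereal P X = \int[P]_x X x.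
Proof. by rewrite /Ereal unlock. Qed.

Lemma Rintegral_dominated_cvg (f_ : nat -> T -> R) (f g : T -> R) :
  (forall n, measurable_fun setT (f_ n)) -> measurable_fun setT f ->
  (forall x, (fun n => f_ n x) @ \oo --> f x) ->
  P.-integrable setT (EFin \o g) -> (forall n x, `|f_ n x| <= g x) ->
  P.-integrable setT (EFin \o f) /\ (fun n => \int[P]_x f_ n x) @ \oo --> \int[P]_x f x.
Proof.
move=> mf_ mf cvg_f g_int f_le_g.
have [] := @dominated_convergence _ _ _ P setT measurableT
  (fun n => EFin \o f_ n) (EFin \o f) (EFin \o g).
- by move=> n; apply/measurable_EFinP.
- exact/measurable_EFinP.
- by apply: aeW => x _ /=; apply: cvg_EFin; [exact: nearW | exact: cvg_f].
- exact: g_int.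
- by apply: aeW => x n _ /=; rewrite lee_fin f_le_g.
move=> f_int _ cvg_int; split => //.
rewrite -(fineK (integrable_fin_num measurableT f_int)) in cvg_int.
exact: fine_cvg cvg_int.
Qed.

End dominated_convergence.

Section Bernstein_variable.
Context {d} {T : measurableType d} {R : realType} (P : probability T R).
Variable X : T -> R.

Definition moment k := \int[P]_x (X x ^+ k).

Definition moment_series (w : nat -> R) (nu : R) K :=
  \sum_(k < K) w k * nu ^+ k * moment k / k`!%:R.

Lemma moment0 : moment 0 = 1.
Proof.
rewrite /moment (_ : (fun x => X x ^+ 0) = cst 1); last first.
  by apply/funext => x; rewrite expr0.
rewrite Rintegral_cst // mul1r.
by have := @probability_setT _ _ _ P => /= ->.
Qed.

Lemma moment2_ge0 : 0 <= moment 2.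
Proof. by apply: Rintegral_ge0 => x _; rewrite sqr_ge0. Qed.

Lemma moment_series_tilted nu K :
  moment_series (fun=> 1) nu K.+1 - nu * \sum_(k < K) nu ^+ k / k`!%:R * moment k.+1 =
  moment_series (fun k => 1 - k%:R) nu K.+1.
Proof.
elim: K => [|K IH].
  by rewrite /moment_series !big_ord1 big_ord0 /= subr0 mulr0 subr0.
move: IH; rewrite /moment_series !big_ord_recr /=.
have fact_neq0 : (K`!%:R : R) != 0 by rewrite pnatr_eq0 -lt0n fact_gt0.
have last_term : 1 * nu ^+ K.+1 * moment K.+1 / (K.+1)`!%:R
   - nu * (nu ^+ K / K`!%:R * moment K.+1)
   = (1 - K.+1%:R) * nu ^+ K.+1 * moment K.+1 / (K.+1)`!%:R.
  rewrite factS natrM exprS.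
  by field; rewrite fact_neq0 paddr_eq0 ?ler01 ?ler0n // oner_eq0.
lra.
Qed.

Variable eps : R.
Hypothesis eps_gt0 : 0 < eps.
Hypothesis X_centred : moment 1 = 0.
Hypothesis X_Bernstein : forall k, (3 <= k)%N ->
  `|moment k| <= 2^-1 * k`!%:R * eps ^+ (k - 2) * moment 2.

Lemma Bernstein_moment_le j : `|moment j.+2| / j.+2`!%:R <= 2^-1 * eps ^+ j * moment 2.
Proof.
case: j => [|j].
  by rewrite ger0_norm ?moment2_ge0 // expr0 mulr1 mulrC.
rewrite ler_pdivrMr ?ltr0n ?fact_gt0 //; apply: (le_trans (X_Bernstein j.+3 isT)).
by rewrite le_eqVlt; apply/orP; left; apply/eqP; ring.
Qed.

Lemma moment_series_tail_le (w : nat -> R) nu K : 0 <= nu ->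
  `|\sum_(j < K) w j.+2 * nu ^+ j.+2 * moment j.+2 / j.+2`!%:R|
    <= nu ^+ 2 * moment 2 / 2 * \sum_(j < K) `|w j.+2| * (nu * eps) ^+ j.
Proof.
move=> nu_ge0; apply: (le_trans (ler_norm_sum _ _ _)).
rewrite big_distrr /=; apply: ler_sum => j _.
have c_ge0 : 0 <= `|w j.+2| * (nu ^+ j * nu ^+ 2) by rewrite !mulr_ge0 ?exprn_ge0.
have -> : `|w j.+2 * nu ^+ j.+2 * moment j.+2 / j.+2`!%:R| =
    `|w j.+2| * (nu ^+ j * nu ^+ 2) * (`|moment j.+2| / j.+2`!%:R).
  rewrite -addn2 exprD !normrM normfV (ger0_norm (ler0n _ _)) !normrX (ger0_norm nu_ge0).
  by ring.
have -> : nu ^+ 2 * moment 2 / 2 * (`|w j.+2| * (nu * eps) ^+ j) =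
    `|w j.+2| * (nu ^+ j * nu ^+ 2) * (2^-1 * eps ^+ j * moment 2).
  by rewrite exprMn; ring.
exact/ler_wpM2l/Bernstein_moment_le.
Qed.

Lemma moment_seriesSS w nu K : moment_series w nu K.+2 =
  w 0%N + \sum_(j < K) w j.+2 * nu ^+ j.+2 * moment j.+2 / j.+2`!%:R.
Proof.
rewrite /moment_series !big_ord_recl /= moment0 X_centred.
by rewrite expr0 !mulr1 mulr0 mul0r add0r fact0 divr1.
Qed.

Lemma moment_series_le w nu W K : 0 <= nu -> nu * eps < 1 ->
  (forall k, `|w k.+2| <= W) ->
  moment_series w nu K.+2 <= w 0%N + nu ^+ 2 * moment 2 / 2 * (W / (1 - nu * eps)).
Proof.
move=> nu_ge0 nu_eps w_le; rewrite moment_seriesSS lerD2l.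
apply: (le_trans (ler_norm _)); apply: (le_trans (moment_series_tail_le _ _ _ nu_ge0)).
apply: ler_wpM2l; first by rewrite !mulr_ge0 ?invr_ge0 ?moment2_ge0 ?exprn_ge0.
have nu_eps_ge0 : 0 <= nu * eps by rewrite mulr_ge0 // ltW.
apply: (@le_trans _ _ (\sum_(j < K) W * (nu * eps) ^+ j)).
  by apply: ler_sum => j _; rewrite ler_wpM2r ?exprn_ge0.
rewrite -big_distrr /=; apply: ler_wpM2l; first exact: le_trans (w_le 0%N).
by apply: sum_geometric_le; rewrite nu_eps_ge0.
Qed.

Lemma moment_series_ge w nu K : 0 <= nu -> nu * eps < 1 ->
  (forall k, `|w k.+2| <= k.+1%:R) ->
  w 0%N - nu ^+ 2 * moment 2 / 2 * (1 - nu * eps) ^- 2 <= moment_series w nu K.+2.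
Proof.
move=> nu_ge0 nu_eps w_le; rewrite moment_seriesSS.
set S := \sum_(j < K) _.
suff : `|S| <= nu ^+ 2 * moment 2 / 2 * (1 - nu * eps) ^- 2.
  by rewrite ler_norml => /andP[]; lra.
apply: (le_trans (moment_series_tail_le _ _ _ nu_ge0)).
apply: ler_wpM2l; first by rewrite !mulr_ge0 ?invr_ge0 ?moment2_ge0 ?exprn_ge0.
have nu_eps_ge0 : 0 <= nu * eps by rewrite mulr_ge0 // ltW.
apply: (@le_trans _ _ (\sum_(j < K) j.+1%:R * (nu * eps) ^+ j)).
  by apply: ler_sum => j _; rewrite ler_wpM2r ?exprn_ge0.
by apply: sum_arithmetico_geometric_le; rewrite nu_eps_ge0.
Qed.

Hypothesis X_measurable : measurable_fun setT X.
Hypothesis X_moments : forall k, P.-integrable setT (fun x => (X x ^+ k)%:E).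

Lemma Rintegral_sum_powers (a : nat -> R) (e : nat -> nat) K :
  P.-integrable setT (EFin \o (fun x => \sum_(k < K) a k * X x ^+ e k)) /\
  \int[P]_x (\sum_(k < K) a k * X x ^+ e k) = \sum_(k < K) a k * moment (e k).
Proof.
elim: K => [|K [IH_int IH_eq]].
  have -> : (fun x => \sum_(k < 0) a k * X x ^+ e k) = cst 0.
    by apply/funext => x; rewrite big_ord0.
  by split; [exact: integrable0 | rewrite big_ord0 /Rintegral integral0].
have -> : (fun x => \sum_(k < K.+1) a k * X x ^+ e k) =
    (fun x => \sum_(k < K) a k * X x ^+ e k + a K * X x ^+ e K).
  by apply/funext => x; rewrite big_ord_recr.
have last_int : P.-integrable setT (EFin \o (fun x => a K * X x ^+ e K)).
  have := integrableZl measurableT (a K) (X_moments (e K)).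
  by apply: (eq_integrable measurableT) => x _ /=; rewrite EFinM.
split.
  have := integrableD measurableT IH_int last_int.
  by apply: (eq_integrable measurableT) => x _ /=; rewrite EFinD.
rewrite RintegralD // IH_eq big_ord_recr /=; congr (_ + _).
by rewrite RintegralZl //; exact: X_moments.
Qed.

Lemma Rintegral_expR_partial nu K :
  \int[P]_x expR_partial (nu * X x) K = moment_series (fun=> 1) nu K.
Proof.
transitivity (\sum_(k < K) nu ^+ k / k`!%:R * moment k); last first.
  by apply: eq_bigr => k _; ring.
rewrite -(Rintegral_sum_powers (fun k => nu ^+ k / k`!%:R) (fun k => k) K).2.
congr (Rintegral _ _ _); apply/funext => x; apply: eq_bigr => k _.
by rewrite exprMn; ring.
Qed.

Lemma Rintegral_expR_partial_sym nu K :
  P.-integrable setT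
    (EFin \o (fun x => expR_partial (nu * X x) K + expR_partial (- nu * X x) K)) /\
  \int[P]_x (expR_partial (nu * X x) K + expR_partial (- nu * X x) K) =
  moment_series (fun k => 1 + (-1) ^+ k) nu K.
Proof.
pose a k := (1 + (-1) ^+ k) * nu ^+ k / k`!%:R.
have -> : (fun x => expR_partial (nu * X x) K + expR_partial (- nu * X x) K) =
    (fun x => \sum_(k < K) a k * X x ^+ k).
  apply/funext => x; rewrite /expR_partial -big_split /=; apply: eq_bigr => k _.
  by rewrite /a (exprMn _ nu) (exprMn _ (- nu)) (exprNn nu); ring.
have [int_s eq_s] := Rintegral_sum_powers a (fun k => k) K.
by split => //; rewrite eq_s; apply: eq_bigr => k _; rewrite /a; ring.
Qed.

Let measurable_mulX c : measurable_fun setT (fun x => c * X x).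
Proof. by apply: measurable_funM => //; exact: measurable_cst. Qed.

Let measurable_expR_mulX c : measurable_fun setT (fun x => expR (c * X x)).
Proof. exact: measurableT_comp (@measurable_expR R) (measurable_mulX c). Qed.

Let measurable_expR_partial (f : T -> R) K :
  measurable_fun setT f -> measurable_fun setT (fun x => expR_partial (f x) K).
Proof.
move=> mf; apply: measurable_sum => k.
by apply: measurable_funM; [exact: measurable_funX | exact: measurable_cst].
Qed.

Lemma integrable_expR_sym mu : 0 <= mu -> mu * eps < 1 ->
  P.-integrable setT (EFin \o (fun x => expR (mu * X x) + expR (- mu * X x))).
Proof.
move=> mu_ge0 mu_eps.
set h := fun x => _.
pose g n x := (expR_partial (mu * X x) n + expR_partial (- mu * X x) n)%:E.
have g_nd x : setT x -> nondecreasing_seq (g^~ x).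
  by move=> _ m n mn; rewrite lee_fin mulNr; exact: nondecreasing_expR_partial_sym.
have g_ge0 n x : setT x -> (0 <= g n x)%E.
  move=> x_T; apply: le_trans (g_nd x x_T 0%N n (leq0n n)).
  by rewrite /g /expR_partial !big_ord0 addr0.
have g_meas n : measurable_fun setT (g n).
  by apply/measurable_EFinP; apply: measurable_funD; exact: measurable_expR_partial.
have := cvg_monotone_convergence (mu := P) measurableT g_meas g_ge0 g_nd.
have -> : (fun x => limn (g^~ x)) = EFin \o h.
  apply/funext => x; apply/cvg_lim => //; apply: cvg_EFin; first exact: nearW.
  by apply: cvgD; exact: cvg_expR_partial.
pose w k : R := 1 + (-1) ^+ k.
have int_g n : (\int[P]_(x in setT) g n x = (moment_series w mu n)%:E)%E.
  have [int_s <-] := Rintegral_expR_partial_sym mu n.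
  by rewrite /Rintegral fineK // (integrable_fin_num measurableT int_s).
move=> cvg_int; rewrite (eq_cvg _ _ int_g) -(cvg_shiftn 2) in cvg_int.
have w_le k : `|w k.+2| <= 2.
  rewrite /w (le_trans (ler_normD _ _)) // normr1 normrX normrN normr1 expr1n.
  by rewrite (_ : 1 + 1 = 2 :> R).
apply/integrableP; split.
  by apply/measurable_EFinP; apply: measurable_funD; exact: measurable_expR_mulX.
rewrite (eq_integral (fun x => (h x)%:E)); last first.
  by move=> x _ /=; rewrite ger0_norm // /h addr_ge0 ?expR_ge0.
apply: (@le_lt_trans _ _ (w 0%N + mu ^+ 2 * moment 2 / 2 * (2 / (1 - mu * eps)))%:E);
  last exact: ltry.
rewrite -(cvg_lim _ cvg_int) //; apply: lime_le.
  by apply/cvg_ex; eexists; exact: cvg_int.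
by apply: nearW => n /=; rewrite lee_fin addn2; exact: moment_series_le.
Qed.

Variable lam : R.
Hypothesis lam_ge0 : 0 <= lam.
Hypothesis lam_eps : lam * eps < 1.

Lemma expR_partial_dominated : exists2 g : T -> R, P.-integrable setT (EFin \o g) &
  forall K x, `|expR_partial (lam * X x) K| <= g x /\
              `|X x * expR_partial (lam * X x) K| <= g x.
Proof.
have lam_lt : lam < eps^-1 by rewrite -div1r ltr_pdivlMr.
pose mu := (lam + eps^-1) / 2.
have lam_mu : lam < mu by rewrite /mu; lra.
have mu_ge0 : 0 <= mu by have := lam_ge0; lra.
have mu_eps : mu * eps < 1.
  have -> : mu * eps = (lam * eps + 1) / 2 by rewrite /mu; field; rewrite gt_eqF.
  by have := lam_eps; lra.
have del_gt0 : 0 < mu - lam by rewrite subr_gt0.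
pose h x := expR (mu * X x) + expR (- mu * X x).
pose C := 1 + (mu - lam)^-1.
exists (fun x => C * h x).
  have := integrableZl measurableT C (integrable_expR_sym _ mu_ge0 mu_eps).
  by apply: (eq_integrable measurableT) => x _ /=; rewrite EFinM.
move=> K x.
have h_ge0 : 0 <= h x by rewrite addr_ge0 ?expR_ge0.
have expR_mu_le : expR (mu * `|X x|) <= h x.
  by have := expR_norm_le (mu * X x); rewrite normrM (ger0_norm mu_ge0) -mulNr.
have partial_le : `|expR_partial (lam * X x) K| <= expR (lam * `|X x|).
  by rewrite (le_trans (norm_expR_partial_le _ _)) // normrM (ger0_norm lam_ge0).
split.
  rewrite (le_trans partial_le) // (@le_trans _ _ (expR (mu * `|X x|))) //.
    by rewrite ler_expR ler_wpM2r // ltW.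
  by rewrite (le_trans expR_mu_le) // ler_peMl // /C lerDl invr_ge0 ltW.
rewrite normrM (le_trans (ler_wpM2l (normr_ge0 _) partial_le)) //.
rewrite (le_trans (mul_expR_le _ _ _ (normr_ge0 (X x)) lam_mu)) //.
have : expR (mu * `|X x|) / (mu - lam) <= h x / (mu - lam).
  by rewrite ler_wpM2r // invr_ge0 ltW.
have : 0 <= h x / (mu - lam) by rewrite divr_ge0 // ltW.
move=> ? ?; rewrite /C mulrDl mul1r; lra.
Qed.

Lemma cvg_moment_series_expR :
  P.-integrable setT (EFin \o (fun x => expR (lam * X x))) /\
  moment_series (fun=> 1) lam @ \oo --> \int[P]_x expR (lam * X x).
Proof.
have [g g_int g_dom] := expR_partial_dominated.
have [int_exp cvg_exp] := Rintegral_dominated_cvg P _ _ _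
  (fun K => measurable_expR_partial _ K (measurable_mulX lam)) (measurable_expR_mulX lam)
  (fun x => cvg_expR_partial _) g_int (fun K x => (g_dom K x).1).
by split => //; rewrite (eq_cvg _ _ (Rintegral_expR_partial lam)) in cvg_exp.
Qed.

Lemma cvg_moment_series_mulX_expR :
  (fun K => \sum_(k < K) lam ^+ k / k`!%:R * moment k.+1) @ \oo -->
  \int[P]_x (X x * expR (lam * X x)).
Proof.
have [g g_int g_dom] := expR_partial_dominated.
have [_ cvg_int] := Rintegral_dominated_cvg P _ _ _
  (fun K => measurable_funM X_measurable
              (measurable_expR_partial _ K (measurable_mulX lam)))
  (measurable_funM X_measurable (measurable_expR_mulX lam))
  (fun x => cvgM (cvg_cst (X x)) (cvg_expR_partial (lam * X x)))
  g_int (fun K x => (g_dom K x).2).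
suff partial_eq K : \int[P]_x (X x * expR_partial (lam * X x) K) =
    \sum_(k < K) lam ^+ k / k`!%:R * moment k.+1.
  by rewrite (eq_cvg _ _ partial_eq) in cvg_int.
rewrite -(Rintegral_sum_powers (fun k => lam ^+ k / k`!%:R) succn K).2.
congr (Rintegral _ _ _); apply/funext => x; rewrite /expR_partial big_distrr /=.
by apply: eq_bigr => k _; rewrite exprMn exprS; ring.
Qed.

Lemma expR_moment_ge1 : 1 <= \int[P]_x expR (lam * X x).
Proof.
have [int_exp _] := cvg_moment_series_expR.
pose a k : R := if k is 0 then 1 else lam.
have [int_lin eq_lin] := Rintegral_sum_powers a (fun k => k) 2.
have <- : \int[P]_x (\sum_(k < 2) a k * X x ^+ k) = 1.
  by rewrite eq_lin big_ord_recr big_ord1 /= moment0 X_centred; ring.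
apply: le_Rintegral => // x _.
rewrite big_ord_recr big_ord1 /= expr0 expr1 mulr1.
by have := expR_ge1Dx (lam * X x); lra.
Qed.

Lemma expR_moment_le :
  \int[P]_x expR (lam * X x) <= 1 + lam ^+ 2 * moment 2 / (2 * (1 - lam * eps)).
Proof.
have [_ cvg_exp] := cvg_moment_series_expR.
rewrite -(cvg_shiftn 2) in cvg_exp.
rewrite -(cvg_lim _ cvg_exp) //; apply: limr_le.
  by apply/cvg_ex; eexists; exact: cvg_exp.
apply: nearW => K /=; rewrite addn2.
apply: le_trans (moment_series_le _ lam 1 K lam_ge0 lam_eps _) _ => [k|].
  by rewrite normr1.
have : 1 - lam * eps != 0 by rewrite subr_eq0 gt_eqF.
by rewrite le_eqVlt => ?; apply/orP; left; apply/eqP; field.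
Qed.

Lemma tilted_expR_moment_ge :
  1 - lam ^+ 2 * moment 2 / (2 * (1 - lam * eps) ^+ 2) <=
  \int[P]_x expR (lam * X x) - lam * \int[P]_x (X x * expR (lam * X x)).
Proof.
have [_ cvg_exp] := cvg_moment_series_expR.
have cvg_tilted : (fun K => moment_series (fun k => 1 - k%:R) lam K.+1) @ \oo -->
    \int[P]_x expR (lam * X x) - lam * \int[P]_x (X x * expR (lam * X x)).
  rewrite -(eq_cvg _ _ (moment_series_tilted lam)).
  apply: cvgB; first by rewrite cvg_shiftS.
  exact: cvgM (cvg_cst lam) cvg_moment_series_mulX_expR.
rewrite -cvg_shiftS /= in cvg_tilted.
rewrite -(cvg_lim _ cvg_tilted) //; apply: limr_ge.
  by apply/cvg_ex; eexists; exact: cvg_tilted.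
apply: nearW => K /=.
have w_le k : `|1 - k.+2%:R : R| <= k.+1%:R.
  rewrite (_ : 1 - k.+2%:R = - k.+1%:R :> R); first by rewrite normrN ger0_norm.
  by rewrite -!natr1; ring.
apply: le_trans (moment_series_ge (fun k => 1 - k%:R) lam K lam_ge0 lam_eps w_le).
have : 1 - lam * eps != 0 by rewrite subr_eq0 gt_eqF.
by rewrite le_eqVlt => ?; apply/orP; left; apply/eqP; field.
Qed.

Lemma mgf_bounds :
  [/\ 1 <= \int[P]_x expR (lam * X x),
      \int[P]_x expR (lam * X x) <= 1 + lam ^+ 2 * moment 2 / (2 * (1 - lam * eps)) &
      - (lam ^+ 2 * moment 2 / (2 * (1 - lam * eps) ^+ 2)) <=
        - lam * (\int[P]_x (X x * expR (lam * X x)) / \int[P]_x expR (lam * X x))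
        + ln (\int[P]_x expR (lam * X x))].
Proof.
split; [exact: expR_moment_ge1 | exact: expR_moment_le |].
apply: ln_sub_ratio_ge; [exact: expR_moment_ge1 | | exact: tilted_expR_moment_ge].
by apply: divr_ge0; apply: mulr_ge0; rewrite ?sqr_ge0 ?moment2_ge0 ?ler0n.
Qed.

End Bernstein_variable.

Lemma Bernstein_mgf_bounds {d} {T : measurableType d} {R : realType}
    (P : probability T R) (X : {RV P >-> R}) (eps lam : R) :
  (forall k, P.-integrable setT (fun x => (X x ^+ k)%:E)) ->
  ('E_P[X] = 0)%E -> 0 < eps ->
  (forall k, (3 <= k)%N -> `|Ereal P (fun x => X x ^+ k)| <=
     2^-1 * k`!%:R * eps ^+ (k - 2) * Ereal P (fun x => X x ^+ 2)) ->
  0 <= lam -> lam * eps < 1 ->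
  [/\ 1 <= Ereal P (fun x => expR (lam * X x)),
      Ereal P (fun x => expR (lam * X x)) <=
        1 + lam ^+ 2 * Ereal P (fun x => X x ^+ 2) / (2 * (1 - lam * eps)) &
      - (lam ^+ 2 * Ereal P (fun x => X x ^+ 2) / (2 * (1 - lam * eps) ^+ 2)) <=
        - lam * (Ereal P (fun x => X x * expR (lam * X x)) /
                 Ereal P (fun x => expR (lam * X x)))
        + ln (Ereal P (fun x => expR (lam * X x)))].
Proof.
move=> X_moments X_mean eps_gt0 X_Bernstein lam_ge0 lam_eps.
have X_centred : moment P X 1 = 0.
  rewrite /moment /Rintegral; under eq_integral do rewrite expr1.
  by move: X_mean; rewrite unlock => ->.
have X_Bernstein' k : (3 <= k)%N ->
    `|moment P X k| <= 2^-1 * k`!%:R * eps ^+ (k - 2) * moment P X 2.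
  by rewrite /moment -!Ereal_Rintegral; exact: X_Bernstein.
rewrite !Ereal_Rintegral.
exact: mgf_bounds eps_gt0 X_centred X_Bernstein' (measurable_funPT X) X_moments
  _ lam_ge0 lam_eps.
Qed.

Theorem lemma2 (R : realType) (d : measure_display) (T : measurableType d)
  (P : probability T R) (n : nat) (xi : 'I_n -> {RV P >-> R}) (eps lam : R) :
  mutually_independent xi ->
  (forall (i : 'I_n) (k : nat), P.-integrable setT (fun x => ((xi i x) ^+ k)%:E)) ->
  (forall i : 'I_n, ('E_P[xi i] = 0)%E) ->
  0 < eps ->
  (forall (i : 'I_n) (k : nat), (3 <= k)%N ->
     `| Ereal P (fun x => xi i x ^+ k) | <=
       2^-1 * (k`!)%:R * eps ^+ (k - 2) * Ereal P (fun x => xi i x ^+ 2)) ->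
  0 <= lam -> lam < eps^-1 ->
  [/\ Psi xi lam <=
        n%:R * ln (1 + lam ^+ 2 * sigma2 xi / (2 * n%:R * (1 - lam * eps))),
      n%:R * ln (1 + lam ^+ 2 * sigma2 xi / (2 * n%:R * (1 - lam * eps))) <=
        lam ^+ 2 * sigma2 xi / (2 * (1 - lam * eps))
    & - lam * Tn xi lam + Psi xi lam >=
        - (lam ^+ 2 * sigma2 xi / (2 * (1 - lam * eps) ^+ 6))].
Proof.
move=> _ xi_moments xi_mean eps_gt0 xi_Bernstein lam_ge0 lam_lt.
have lam_eps : lam * eps < 1 by rewrite -ltr_pdivlMr // div1r.
have c_gt0 : 0 < 1 - lam * eps by rewrite subr_gt0.
have c_le1 : 1 - lam * eps <= 1 by have := mulr_ge0 lam_ge0 (ltW eps_gt0); lra.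
have bounds i := Bernstein_mgf_bounds _ _ _ _ (xi_moments i) (xi_mean i) eps_gt0
  (xi_Bernstein i) lam_ge0 lam_eps.
pose b i := lam ^+ 2 * Ereal P (fun x => xi i x ^+ 2) / (2 * (1 - lam * eps)).
have b_ge0 i : 0 <= b i.
  rewrite /b Ereal_Rintegral; apply: divr_ge0; apply: mulr_ge0;
    by rewrite ?sqr_ge0 ?moment2_ge0 ?ler0n ?ltW.
have sum_b : \sum_(i < n) b i = lam ^+ 2 * sigma2 xi / (2 * (1 - lam * eps)).
  by rewrite -big_distrl -big_distrr.
have -> : lam ^+ 2 * sigma2 xi / (2 * n%:R * (1 - lam * eps)) = (\sum_(i < n) b i) / n%:R.
  by rewrite sum_b !invfM; ring.
rewrite -sum_b; split.
- by apply: sum_ln_le_mean => // i; rewrite /b; have [] := bounds i; lra.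
- exact/natr_mul_ln1D_le/sumr_ge0.
rewrite /Psi /Tn /sigma2 !mulr_sumr -big_split mulr_suml -sumrN /=.
apply: ler_sum => i _; have [_ _] := bounds i; apply: le_trans.
rewrite lerN2 ler_wpM2l ?mulr_ge0 ?sqr_ge0 ?Ereal_Rintegral ?moment2_ge0 //.
rewrite lef_pV2 ?posrE ?mulr_gt0 ?exprn_gt0 // ler_pM2l //.
by rewrite ler_wiXn2l // ltW.
Qed.
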